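(* Let $(\mathfrak{g},[\cdot,\ldots,\cdot],\varepsilon,\alpha)$ be an $n$-Hom-Lie color algebra and $\mathcal{P}$ a strict product structure on it. Then $\mathcal{P}$ is a product structure on $\mathfrak{g}$, and, writing $\mathfrak{g}_+=\{x:\mathcal{P}x=x\}$ and $\mathfrak{g}_-=\{x:\mathcal{P}x=-x\}$, for every $1\le i\le n-1$ we have $[a_1,\ldots,a_i,b_{i+1},\ldots,b_n]=0$ for all $a_1,\ldots,a_i\in\mathfrak{g}_+$ and $b_{i+1},\ldots,b_n\in\mathfrak{g}_-$.
   Context: $\mathbb{K}$ is a field of characteristic zero and $\Gamma$ an abelian group. A bicharacter is a map $\varepsilon:\Gamma\times\Gamma\to\mathbb{K}\setminus\{0\}$ with $\varepsilon(a,b)\varepsilon(b,a)=1$, $\varepsilon(a,b+c)=\varepsilon(a,b)\varepsilon(a,c)$, $\varepsilon(a+b,c)=\varepsilon(a,c)\varepsilon(b,c)$. For homogeneous $x,y$, $\varepsilon(x,y)=\varepsilon(|x|,|y|)$ and $\varepsilon(x,y_1+\dots+y_k)=\varepsilon(|x|,|y_1|+\dots+|y_k|)$ ($=1$ for an empty sum). An $n$-Hom-Lie color algebra $(\mathfrak{g},[\cdot,\ldots,\cdot],\varepsilon,\alpha)$ is a $\Gamma$-graded vector space with an $n$-linear bracket of degree zero, a bicharacter $\varepsilon$ and a degree-zero linear map $\alpha$ such that for homogeneous elements: (i) $[x_1,\ldots,x_i,x_{i+1},\ldots,x_n]=-\varepsilon(x_i,x_{i+1})[x_1,\ldots,x_{i+1},x_i,\ldots,x_n]$;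 (ii) $[\alpha(x_1),\ldots,\alpha(x_{n-1}),[y_1,\ldots,y_n]]=\sum_{i=1}^n\varepsilon(x_1+\dots+x_{n-1},y_1+\dots+y_{i-1})[\alpha(y_1),\ldots,\alpha(y_{i-1}),[x_1,\ldots,x_{n-1},y_i],\alpha(y_{i+1}),\ldots,\alpha(y_n)]$. For a degree-zero linear $\mathcal{N}$ set $[\cdot]^0_{\mathcal{N}}=[\cdot]$ and $[x_1,\ldots,x_n]^j_{\mathcal{N}}=\sum_{i_1<\dots<i_j}[x_1,\ldots,\mathcal{N}x_{i_1},\ldots,\mathcal{N}x_{i_j},\ldots,x_n]-\mathcal{N}([x_1,\ldots,x_n]^{j-1}_{\mathcal{N}})$ for $1\le j\le n-1$; $\mathcal{N}$ is a Nijenhuis operator if $\mathcal{N}\alpha=\alpha\mathcal{N}$ and $[\mathcal{N}x_1,\ldots,\mathcal{N}x_n]=\mathcal{N}([x_1,\ldots,x_n]^{n-1}_{\mathcal{N}})$. An almost product structure is a degree-zero linear $\mathcal{P}$ with $\mathcal{P}\neq\pm\mathrm{id}$ and $\mathcal{P}^2=\mathrm{id}$; a product structure is an almost product structure which is a Nijenhuis operator. A degree-zero linear map $\Theta$ is in the centroid if $\Theta\alpha=\alpha\Theta$ and $\Theta([x_1,x_2,\ldots,x_n])=[\Theta x_1,x_2,\ldots,x_n]$ for all $x_i$. A strict product structure is an almost product structure lying in the centroid. *)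

From HB Require Import structures.
From mathcomp Require Import all_boot all_order all_algebra.
Set Implicit Arguments. Unset Strict Implicit. Unset Printing Implicit Defensive.
Import Order.TTheory GRing.Theory Num.Theory.
Local Open Scope ring_scope.

Section HomLieColor.
Variables (K : fieldType) (G : zmodType) (V : lmodType K).

(* hom a x  <->  x is homogeneous of degree a, i.e. x \in V_a *)
Definition graded_space (hom : G -> V -> Prop) : Prop :=
  [/\ (forall a, hom a 0),
      (forall a x y, hom a x -> hom a y -> hom a (x + y)),
      (forall a (k : K) x, hom a x -> hom a (k *: x)),
      (forall x : V, exists (s : seq G) (f : G -> V),
          (forall g, hom g (f g)) /\ x = \sum_(g <- s) f g) &
      (forall (s : seq G) (f : G -> V), uniq s -> (forall g, hom g (f g)) ->
          \sum_(g <- s) f g = 0 -> forall g, g \in s -> f g = 0)].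

Definition bicharacter (eps : G -> G -> K) : Prop :=
  [/\ (forall a b, eps a b != 0),
      (forall a b, eps a b * eps b a = 1),
      (forall a b c, eps a (b + c) = eps a b * eps a c) &
      (forall a b c, eps (a + b) c = eps a c * eps b c)].

Definition deg0 (hom : G -> V -> Prop) (f : V -> V) : Prop :=
  forall a x, hom a x -> hom a (f x).

Variable n : nat.

Definition upd (x : {ffun 'I_n -> V}) (i : 'I_n) (v : V) : {ffun 'I_n -> V} :=
  [ffun j => if j == i then v else x j].

Definition multilinear (br : {ffun 'I_n -> V} -> V) : Prop :=
  forall (x : {ffun 'I_n -> V}) (i : 'I_n) (k : K) (u v : V),
    br (upd x i (k *: u + v)) = k *: br (upd x i u) + br (upd x i v).

Definition bracket_deg0 (hom : G -> V -> Prop) (br : {ffun 'I_n -> V} -> V) :=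
  forall (a : 'I_n -> G) (x : {ffun 'I_n -> V}),
    (forall i, hom (a i) (x i)) -> hom (\sum_(i < n) a i) (br x).

Definition color_skew (hom : G -> V -> Prop) (eps : G -> G -> K)
    (br : {ffun 'I_n -> V} -> V) : Prop :=
  forall (a : 'I_n -> G) (x : {ffun 'I_n -> V}) (i j : 'I_n),
    val j = (val i).+1 -> (forall k, hom (a k) (x k)) ->
    br x = - (eps (a i) (a j) *: br [ffun k => if k == i then x j else if k == j then x i else x k]).

(* (ii) Hom-Filippov-Jacobi identity.  The (n-1) elements x_1..x_{n-1} are
   the entries of x at indices < n-1 (the last entry of x is ignored). *)
Definition hom_jacobi (hom : G -> V -> Prop) (eps : G -> G -> K)
    (br : {ffun 'I_n -> V} -> V) (alpha : V -> V) : Prop :=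
  forall (a b : 'I_n -> G) (x y : {ffun 'I_n -> V}),
    (forall j : 'I_n, (val j < n.-1)%N -> hom (a j) (x j)) ->
    (forall k, hom (b k) (y k)) ->
    br [ffun j => if val j == n.-1 then br y else alpha (x j)] =
    \sum_(i < n)
      eps (\sum_(j < n | (val j < n.-1)%N) a j) (\sum_(k < n | (val k < val i)%N) b k) *:
      br [ffun k => if k == i then
                      br [ffun j => if val j == n.-1 then y i else x j]
                    else alpha (y k)].

Definition nHomLieColor (hom : G -> V -> Prop) (br : {ffun 'I_n -> V} -> V)
    (eps : G -> G -> K) (alpha : {linear V -> V}) : Prop :=
  [/\ graded_space hom, multilinear br, bracket_deg0 hom br, bicharacter eps &
      [/\ deg0 hom alpha, color_skew hom eps br & hom_jacobi hom eps br alpha]].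

Definition applyN (N : V -> V) (S : {set 'I_n}) (x : {ffun 'I_n -> V}) :
    {ffun 'I_n -> V} := [ffun k => if k \in S then N (x k) else x k].

Fixpoint nbr (br : {ffun 'I_n -> V} -> V) (N : V -> V) (j : nat)
    (x : {ffun 'I_n -> V}) : V :=
  match j with
  | 0 => br x
  | j'.+1 => \sum_(S : {set 'I_n} | #|S| == j'.+1) br (applyN N S x)
             - N (nbr br N j' x)
  end.

Definition nijenhuis (hom : G -> V -> Prop) (br : {ffun 'I_n -> V} -> V)
    (alpha : V -> V) (N : {linear V -> V}) : Prop :=
  [/\ deg0 hom N, (forall v, N (alpha v) = alpha (N v)) &
      forall x : {ffun 'I_n -> V},
        br [ffun k => N (x k)] = N (nbr br N n.-1 x)].

Definition almost_product (hom : G -> V -> Prop) (P : {linear V -> V}) : Prop :=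
  [/\ deg0 hom P, ~ (forall v, P v = v), ~ (forall v, P v = - v) &
      forall v, P (P v) = v].

Definition product_structure (hom : G -> V -> Prop) (br : {ffun 'I_n -> V} -> V)
    (alpha : V -> V) (P : {linear V -> V}) : Prop :=
  almost_product hom P /\ nijenhuis hom br alpha P.

Definition centroid (hom : G -> V -> Prop) (br : {ffun 'I_n -> V} -> V)
    (alpha : V -> V) (T : {linear V -> V}) : Prop :=
  [/\ deg0 hom T, (forall v, T (alpha v) = alpha (T v)) &
      forall (x : {ffun 'I_n -> V}) (i0 : 'I_n), val i0 = 0%N ->
        T (br x) = br (upd x i0 (T (x i0)))].

Definition strict_product (hom : G -> V -> Prop) (br : {ffun 'I_n -> V} -> V)
    (alpha : V -> V) (P : {linear V -> V}) : Prop :=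
  almost_product hom P /\ centroid hom br alpha P.

End HomLieColor.

(* A strict product structure P commutes with the bracket in its first
   argument; colour skew-symmetry moves it to any argument of a homogeneous
   tuple, and multiadditivity plus the grading extends this to all tuples.
   Hence applying P to j arguments gives P^j [x], so the deformed brackets
   are [x]^j_P = C(n-1, j) P^j [x], and the Nijenhuis identity reduces to
   P^n [x] = P^n [x].  For a tuple with x_1 in g_+ and x_n in g_-, moving P
   onto x_1 or onto x_n gives P [x] = [x] = - [x], so [x] = 0 in
   characteristic zero. *)
From HB Require Import structures.
From mathcomp Require Import all_boot all_order all_algebra.
From mathcomp Require Import zify.
Import Order.TTheory GRing.Theory Num.Theory.
Local Open Scope ring_scope.

Section Update.
Context {K : fieldType} {V : lmodType K} {n : nat}.
Implicit Types (x : {ffun 'I_n -> V}) (i j : 'I_n) (u v : V).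

Lemma updE x i v j : upd x i v j = if j == i then v else x j.
Proof. by rewrite ffunE. Qed.

Lemma upd_id x i : upd x i (x i) = x.
Proof. by apply/ffunP => j; rewrite updE; case: eqP => // ->. Qed.

Lemma upd_upd x i u v : upd (upd x i u) i v = upd x i v.
Proof. by apply/ffunP => j; rewrite !updE; case: eqP. Qed.

Lemma upd_comm x i j u v : i != j ->
  upd (upd x i u) j v = upd (upd x j v) i u.
Proof.
move=> neq_ij; apply/ffunP => k; rewrite !updE.
by case: (eqVneq k j) => [->|//]; rewrite eq_sym (negbTE neq_ij).
Qed.

End Update.

Definition multiadditive {K : fieldType} {V : lmodType K} {n : nat}
    (F : {ffun 'I_n -> V} -> V) : Prop :=
  forall x i u v, F (upd x i (u + v)) = F (upd x i u) + F (upd x i v).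

Section Multiadditive.
Context {K : fieldType} {G : zmodType} {V : lmodType K} {n : nat}.
Context {F : {ffun 'I_n -> V} -> V}.
Hypothesis F_add : multiadditive F.
Implicit Types (x : {ffun 'I_n -> V}) (i : 'I_n).

Lemma multiadditive_upd0 x i : F (upd x i 0) = 0.
Proof.
have := F_add x i 0 0; rewrite addr0 => F0.
by apply: (@addrI _ (F (upd x i 0))); rewrite addr0 -F0.
Qed.

Lemma multiadditive_upd_sum x i (s : seq G) (f : G -> V) :
  F (upd x i (\sum_(g <- s) f g)) = \sum_(g <- s) F (upd x i (f g)).
Proof.
elim: s => [|g s IH]; first by rewrite !big_nil multiadditive_upd0.
by rewrite !big_cons F_add IH.
Qed.

Context {hom : G -> V -> Prop}.
Hypothesis hom_graded : graded_space hom.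

Lemma multiadditive_eq0_homogeneous :
  (forall (a : 'I_n -> G) x, (forall k, hom (a k) (x k)) -> F x = 0) ->
  forall x, F x = 0.
Proof.
have [_ _ _ hom_decomp _] := hom_graded; move=> F_hom.
(* decompose the arguments into homogeneous parts one at a time, from the last *)
suff F_tail m x (a : 'I_n -> G) :
    (forall k : 'I_n, (m <= val k)%N -> hom (a k) (x k)) -> F x = 0.
  by move=> x; apply: (F_tail n x (fun=> 0)) => k; rewrite leqNgt ltn_ord.
elim: m x a => [|m IH] x a a_hom; first by apply: (F_hom a) => k; apply: a_hom.
have [lt_mn | le_nm] := ltnP m n; last first.
  by apply: (IH x a) => k le_mk; have := leq_trans le_nm le_mk; rewrite leqNgt ltn_ord.
pose i := Ordinal lt_mn.
have [s [f [f_hom x_i]]] := hom_decomp (x i).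
rewrite -(upd_id x i) x_i multiadditive_upd_sum big1_seq // => g _.
apply: (IH _ (fun k => if k == i then g else a k)) => k le_mk.
rewrite updE; case: (eqVneq k i) => [_|neq_ki]; first exact: f_hom.
apply: a_hom; have : val k != m by apply: contra neq_ki => /eqP eq_km; apply/eqP/val_inj.
lia.
Qed.

End Multiadditive.

Section Multilinear.
Context {K : fieldType} {V : lmodType K} {n : nat}.
Context {br : {ffun 'I_n -> V} -> V}.
Hypothesis br_linear : multilinear br.
Implicit Types (x : {ffun 'I_n -> V}) (i : 'I_n).

Lemma multilinear_multiadditive : multiadditive br.
Proof. by move=> x i u v; have := br_linear x i 1 u v; rewrite !scale1r. Qed.

Lemma multilinear_updN x i u : br (upd x i (- u)) = - br (upd x i u).
Proof.
have := br_linear x i (-1) u 0.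
by rewrite addr0 !scaleN1r (multiadditive_upd0 multilinear_multiadditive) addr0.
Qed.

End Multilinear.

Section CentroidFirstArgument.
Context {K : fieldType} {G : zmodType} {V : lmodType K} {n : nat}.
Context {hom : G -> V -> Prop} {br : {ffun 'I_n -> V} -> V} {eps : G -> G -> K}.
Context {P : {linear V -> V}}.
Hypotheses (hom_graded : graded_space hom) (br_linear : multilinear br).
Hypotheses (br_skew : color_skew hom eps br) (P_deg0 : deg0 hom P).
Implicit Types (x : {ffun 'I_n -> V}) (i : 'I_n).
Hypothesis P_br0 :
  forall x (i0 : 'I_n), val i0 = 0%N -> P (br x) = br (upd x i0 (P (x i0))).

Lemma centroid_upd_homogeneous (a : 'I_n -> G) x i :
  (forall k, hom (a k) (x k)) -> P (br x) = br (upd x i (P (x i))).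
Proof.
have [m val_i] : exists m, val i = m by exists (val i).
elim: m i a x val_i => [|m IH] i a x val_i x_hom; first exact: P_br0.
have lt_mn : (m < n)%N.
  by move: (ltn_ord i); rewrite -[nat_of_ord i]/(val i) val_i => /ltnW.
pose i' := Ordinal lt_mn.
have val_i' : val i = (val i').+1 by rewrite val_i.
have neq_i'i : i' != i by apply/eqP => /(congr1 val) /=; rewrite val_i; lia.
pose swap (T : Type) (f : 'I_n -> T) k :=
  if k == i' then f i else if k == i then f i' else f k.
have Px_hom k : hom (a k) (upd x i (P (x i)) k).
  by rewrite updE; case: eqP => [->|_]; [apply: P_deg0|]; apply: x_hom.
(* swap positions i' and i, use the induction hypothesis at i', swap back *)
rewrite (br_skew a _ i' i val_i' Px_hom) (br_skew a x i' i val_i' x_hom).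
rewrite linearN linearZ /=.
rewrite (IH i' (swap _ a) _ erefl); last first.
  by move=> k; rewrite ffunE /swap; case: eqP => _; [|case: eqP => _]; apply: x_hom.
congr (- (_ *: br _)); apply/ffunP => k; rewrite !ffunE !eqxx (negbTE neq_i'i).
by case: (eqVneq k i') => // _; case: (eqVneq k i).
Qed.

Lemma centroid_upd x i : P (br x) = br (upd x i (P (x i))).
Proof.
apply/eqP; rewrite -subr_eq0; apply/eqP; move: x.
pose F (y : {ffun 'I_n -> V}) := P (br y) - br (upd y i (P (y i))).
apply: (@multiadditive_eq0_homogeneous _ _ _ _ F _ _ hom_graded); last first.
  by move=> a y y_hom; rewrite /F (centroid_upd_homogeneous _ _ i y_hom) subrr.
have br_add := multilinear_multiadditive br_linear.
move=> y j u v; rewrite /F; case: (eqVneq j i) => [->|neq_ji].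
  by rewrite !upd_upd !updE !eqxx linearD !br_add linearD opprD addrACA.
rewrite !updE eq_sym (negbTE neq_ji) ![upd (upd y j _) i _](upd_comm _ _ _ _ _ neq_ji).
by rewrite !br_add linearD opprD addrACA.
Qed.

End CentroidFirstArgument.

Section CentroidEveryArgument.
Context {K : fieldType} {V : lmodType K} {n : nat}.
Context {br : {ffun 'I_n -> V} -> V} {P : {linear V -> V}}.
Implicit Types (x : {ffun 'I_n -> V}) (i : 'I_n).
Hypothesis P_br : forall x i, P (br x) = br (upd x i (P (x i))).

Lemma centroid_applyN (S : {set 'I_n}) x : br (applyN P S x) = iter #|S| P (br x).
Proof.
have [k card_S] : exists k, #|S| = k by exists #|S|.
rewrite card_S; elim: k S card_S => [|k IH] S card_S.
  have -> : S = set0 by apply/eqP; rewrite -cards_eq0 card_S.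
  by congr br; apply/ffunP => j; rewrite ffunE in_set0.
have /set0Pn [i iS] : S != set0 by rewrite -card_gt0 card_S.
have card_Si : #|S :\ i| = k by move: card_S; rewrite (cardsD1 i S) iS add1n => -[].
have -> : applyN P S x = upd (applyN P (S :\ i) x) i (P (applyN P (S :\ i) x i)).
  apply/ffunP => j; rewrite !ffunE !in_setD1 eqxx /=.
  by case: (eqVneq j i) => [->|] //=; rewrite iS.
by rewrite -P_br IH.
Qed.

(* Pascal's rule C(n, j+1) = C(n-1, j+1) + C(n-1, j) drives the recursion. *)
Lemma nbr_centroid : (0 < n)%N ->
  forall j x, nbr br P j x = iter j P (br x) *+ 'C(n.-1, j).
Proof.
move=> n_gt0; elim=> [|j IH] x /=; first by rewrite bin0.
under eq_bigr => S /eqP card_S do rewrite centroid_applyN card_S.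
rewrite sumr_const IH raddfMn /=.
have -> : #|[pred S : {set 'I_n} | #|S| == j.+1]| = 'C(n, j.+1).
  by rewrite -cardsE card_draws card_ord.
by rewrite -(prednK n_gt0) binS prednK // mulrnDr addrK.
Qed.

Lemma centroid_nijenhuis_identity : (0 < n)%N ->
  forall x, br [ffun k => P (x k)] = P (nbr br P n.-1 x).
Proof.
move=> n_gt0 x; rewrite nbr_centroid // binn mulr1n -iterS prednK //.
have -> : [ffun k => P (x k)] = applyN P setT x.
  by apply/ffunP => k; rewrite !ffunE in_setT.
by rewrite centroid_applyN cardsT card_ord.
Qed.

Lemma centroid_bracket_eq0_opposite_eigen :
  multilinear br -> (2%:R : K) != 0 ->
  forall x i j, P (x i) = x i -> P (x j) = - x j -> br x = 0.
Proof.
move=> br_linear two_neq0 x i j Pxi Pxj.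
have Pbr_plus : P (br x) = br x by rewrite (P_br x i) Pxi upd_id.
have Pbr_minus : P (br x) = - br x by rewrite (P_br x j) Pxj multilinear_updN // upd_id.
have : 2%:R *: br x = 0 by rewrite scaler_nat mulr2n -{1}Pbr_plus Pbr_minus addNr.
by move/eqP; rewrite scaler_eq0 (negbTE two_neq0) => /eqP.
Qed.

End CentroidEveryArgument.

Lemma hom_jacobi_ord0_eq0 {K : fieldType} {G : zmodType} {V : lmodType K}
    {hom : G -> V -> Prop} {eps : G -> G -> K} {br : {ffun 'I_0 -> V} -> V}
    {alpha : V -> V} :
  hom_jacobi hom eps br alpha -> forall x, br x = 0.
Proof.
move=> jacobi x; have -> : x = [ffun j => if val j == 0.-1 then br x else alpha (x j)].
  by apply/ffunP => -[].
by rewrite (jacobi (fun=> 0) (fun=> 0) x x) ?big_ord0 // => -[].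
Qed.

Theorem lemma6p10 (K : fieldType) (G : zmodType) (V : lmodType K) (n : nat)
    (hom : G -> V -> Prop) (br : {ffun 'I_n -> V} -> V) (eps : G -> G -> K)
    (alpha P : {linear V -> V}) :
  [pchar K] =i pred0 ->
  nHomLieColor hom br eps alpha ->
  strict_product hom br alpha P ->
  product_structure hom br alpha P /\
  (forall i : nat, (1 <= i <= n.-1)%N ->
     forall x : {ffun 'I_n -> V},
       (forall k : 'I_n, (val k < i)%N -> P (x k) = x k) ->
       (forall k : 'I_n, (i <= val k)%N -> P (x k) = - x k) ->
       br x = 0).
Proof.
move=> char0 [graded br_linear _ _ [_ br_skew jacobi]] [P_ap [P_deg0 P_alpha P_br0]].
have P_br := centroid_upd graded br_linear br_skew P_deg0 P_br0.
split.
  split=> //; split=> // x.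
  have [n0|n_gt0] := posnP n; last exact: centroid_nijenhuis_identity.
  by subst n; rewrite /= !(hom_jacobi_ord0_eq0 jacobi) linear0.
move=> i /andP [i_gt0 i_lt] x x_plus x_minus.
have two_neq0 : (2%:R : K) != 0.
  by apply/negP => two0; have := char0 2; rewrite !inE two0.
have first_lt : (0 < n)%N by lia.
have last_lt : (n.-1 < n)%N by lia.
apply: (centroid_bracket_eq0_opposite_eigen P_br br_linear two_neq0 x
          (Ordinal first_lt) (Ordinal last_lt)); [exact: x_plus | exact: x_minus].
Qed.
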